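(* Let $m\ge 1$, $P,Q\ge 0$ be integers with $N=P+Q\ge1$, let $D$, $F_1,\ldots,F_m$, $\mathcal{E}$, $d$ and $G_F:\mathcal{E}\to\mathcal{E}$ be as described in the context, and assume that the state network of $G_F$ is strongly connected. Then the set of periodic points of $G_F$ is dense in the metric space $(\mathcal{E},d)$; that is, for every $E\in\mathcal{E}$ and every $\varepsilon>0$ there exist $E'\in\mathcal{E}$ and $k\ge1$ with $G_F^k(E')=E'$ and $d(E,E')<\varepsilon$.
   Context: Let $D=\{k\,2^{-Q}: k=0,1,\ldots,2^N-1\}$ be the set of $N$-bit fixed-point numbers; each $x\in D$ is written in binary as $x=x_{P-1}x_{P-2}\ldots x_0.x_{-1}\ldots x_{-Q}$ with digits $x_j\in\{0,1\}$. For $x,y\in D$ let $x\cdot y$, $x+y$ and $\overline{x}$ denote bitwise AND, bitwise OR and bitwise NOT (complement of every one of the $N$ digits), which are again elements of $D$. Let $F_1,\ldots,F_m:D^m\to D$ be arbitrary functions. Let $\Sigma$ be the set of one-sided infinite sequences $w=w^1w^2\ldots$ with $w^k\in D$, and $\sigma:\Sigma\to\Sigma$ the left shift $\sigma(w)=w^2w^3\ldots$. Let $\mathcal{E}=\Sigma^m\times D^m$, with elements $E=((w_1,\ldots,w_m),(x_1,\ldots,x_m))$. Define $G_F:\mathcal{E}\to\mathcal{E}$ by $G_F((w_1,\ldots,w_m),x)=((\sigma(w_1),\ldots,\sigma(w_m)),(H_1,\ldots,H_m))$, where $x=(x_1,\ldots,x_m)$ and $H_i=(x_i\cdot\overline{w_i^1})+(F_i(x)\cdot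 w_i^1)$ (i.e. bit $j$ of $x_i$ is replaced by bit $j$ of $F_i(x)$ exactly when bit $j$ of $w_i^1$ is $1$). The metric on $\mathcal{E}$ is $d(E,\hat E)=\sum_{i=1}^m\sum_{k=1}^\infty \frac{|w_i^k-\hat w_i^k|}{2^{Nk}}+\sqrt{\sum_{i=1}^m (x_i-\hat x_i)^2}$. The state network of $G_F$ is the directed graph whose vertex set is $D^m$, with an edge from $\hat x$ to $\tilde x$ whenever there is some $(w_1,\ldots,w_m)\in\Sigma^m$ such that the $D^m$-component of $G_F((w_1,\ldots,w_m),\hat x)$ equals $\tilde x$. It is strongly connected if every vertex is reachable from every other vertex by a directed path. *)

From mathcomp Require Import all_boot all_order all_algebra.
From mathcomp Require Import all_classical all_reals all_analysis.
From Stdlib Require Import Relations.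
Set Implicit Arguments. Unset Strict Implicit. Unset Printing Implicit Defensive.
Import Order.TTheory GRing.Theory Num.Theory.
Local Open Scope ring_scope.

(* An N-bit fixed point number x = x_{P-1}...x_0.x_{-1}...x_{-Q} (N = P+Q)
   is given by its N binary digits; digit index j : 'I_N stands for the
   digit of weight 2^(j-Q). *)
Definition D (N : nat) := 'I_N -> bool.

Definition Dval (R : realType) (N Q : nat) (x : D N) : R :=
  (\sum_(j < N) (x j)%:R * 2 ^+ j) / 2 ^+ Q.

Definition band N (x y : D N) : D N := fun j => x j && y j.
Definition bor  N (x y : D N) : D N := fun j => x j || y j.
Definition bnot N (x : D N) : D N := fun j => ~~ x j.

(* sequences w = w^1 w^2 ... ; w n stands for w^(n+1) *)
Definition Sigma N := nat -> D N.
Definition shift N (w : Sigma N) : Sigma N := fun n => w n.+1.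

Definition Espace m N := (('I_m -> Sigma N) * ('I_m -> D N))%type.

Definition GF m N (F : 'I_m -> ('I_m -> D N) -> D N) (E : Espace m N)
  : Espace m N :=
  (fun i => shift (E.1 i),
   fun i => bor (band (E.2 i) (bnot (E.1 i 0%N))) (band (F i E.2) (E.1 i 0%N))).

Definition rseries (R : realType) (u : nat -> R) : R :=
  limn (fun n => \sum_(k < n) u k).

Definition dist (R : realType) (m P Q : nat) (E Eh : Espace m (P + Q)) : R :=
  \sum_(i < m) rseries (fun k =>
      `|Dval R Q (E.1 i k) - Dval R Q (Eh.1 i k)| / 2 ^+ ((P + Q) * k.+1))
  + Num.sqrt (\sum_(i < m) (Dval R Q (E.2 i) - Dval R Q (Eh.2 i)) ^+ 2).

Definition state_edge m N (F : 'I_m -> ('I_m -> D N) -> D N)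
  (xh xt : 'I_m -> D N) : Prop :=
  exists W : 'I_m -> Sigma N, (GF F (W, xh)).2 = xt.

Definition strongly_connected m N (F : 'I_m -> ('I_m -> D N) -> D N) : Prop :=
  forall x y : 'I_m -> D N, clos_refl_trans _ (state_edge F) x y.
Arguments dist R m P Q E Eh : clear implicits.

(* Given E = (w, x) and n, the first n letters of w drive the state from x to
   some y; strong connectivity gives finitely many further letters leading back
   from y to x. Repeating this finite word forever gives a strategy W with
   G_F^k (W, x) = (W, x), where k is the length of the word, and W agrees with w
   on its first n letters, so d(E, (W, x)) = O(2^-n). *)
From mathcomp Require Import all_boot all_order all_algebra.
From mathcomp Require Import all_classical all_reals all_analysis.
From mathcomp Require Import ring lra.
From Stdlib Require Import Relations.
Import Order.TTheory GRing.Theory Num.Theory.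
Local Open Scope ring_scope.

Section Strategies.
Context {m N : nat} (F : 'I_m -> ('I_m -> D N) -> D N).

Definition GF_state (x c : 'I_m -> D N) : 'I_m -> D N :=
  fun i => bor (band (x i) (bnot (c i))) (band (F i x) (c i)).

Definition strategy_letters (W : 'I_m -> Sigma N) (n : nat) :=
  mkseq (fun t i => W i t) n.

Definition periodic_strategy (S : seq ('I_m -> D N)) : 'I_m -> Sigma N :=
  fun i t => nth (fun _ _ => false) S (t %% size S) i.

Lemma clos_rt_state_edge_foldl {x y} :
  clos_refl_trans _ (state_edge F) x y ->
  exists cs : seq ('I_m -> D N), foldl GF_state x cs = y.
Proof.
elim=> [a b [W <-]| a | a b c _ [cs1 H1] _ [cs2 H2]].
- by exists [:: fun i => W i 0%N].
- by exists [::].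
- by exists (cs1 ++ cs2); rewrite foldl_cat H1.
Qed.

Lemma iter_GF k W x :
  iter k (GF F) (W, x) =
  (fun i t => W i (t + k)%N, foldl GF_state x (strategy_letters W k)).
Proof.
elim: k W x => [|k IH] W x.
  by congr pair; apply: funext => i; apply: funext => t; rewrite addn0.
rewrite iterSr IH /=; congr pair.
  by apply: funext => i; apply: funext => t; rewrite /shift addnS.
congr foldl; rewrite /strategy_letters /mkseq -[iota 1 k]/(iota (1 + 0) k).
by rewrite iotaDl -map_comp.
Qed.

Lemma strategy_letters_periodic S :
  strategy_letters (periodic_strategy S) (size S) = S.
Proof.
rewrite -[RHS](mkseq_nth (fun _ _ => false)); apply/eq_in_map => t.
rewrite mem_iota add0n => /andP[_ tS].
by apply: funext => i; rewrite /periodic_strategy modn_small.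
Qed.

Lemma iter_GF_periodic S x :
  iter (size S) (GF F) (periodic_strategy S, x) =
  (periodic_strategy S, foldl GF_state x S).
Proof.
rewrite iter_GF strategy_letters_periodic; congr pair.
by apply: funext => i; apply: funext => t; rewrite /periodic_strategy modnDr.
Qed.

Lemma periodic_strategy_prefix w n cs i t : (t < n)%N ->
  periodic_strategy (strategy_letters w n ++ cs) i t = w i t.
Proof.
move=> tn; have tS : (t < size (strategy_letters w n ++ cs))%N.
  by rewrite size_cat size_mkseq ltn_addr.
by rewrite /periodic_strategy modn_small // nth_cat size_mkseq tn nth_mkseq.
Qed.

End Strategies.

Section Estimates.
Variable R : realType.

Lemma rseries_le (u : nat -> R) (B : R) :
  (forall k, 0 <= u k) -> (forall n, \sum_(k < n) u k <= B) -> rseries u <= B.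
Proof.
move=> u0 uB; have nd : nondecreasing_seq (fun n => \sum_(k < n) u k).
  by apply/nondecreasing_seqP => n; rewrite big_ord_recr /= lerDl.
apply: limr_le; last exact: nearW.
by apply: nondecreasing_is_cvgn => //; exists B => _ [n _ <-].
Qed.

Lemma rseries_le_geometric_tail (u : nat -> R) (C : R) n :
  0 <= C -> (forall t, 0 <= u t) -> (forall t, (t < n)%N -> u t = 0) ->
  (forall t, u t <= C / 2 ^+ t.+1) -> rseries u <= C / 2 ^+ n.
Proof.
move=> C0 u0 u_prefix u_le; apply: rseries_le => // j.
have p2 t : (0 : R) < 2 ^+ t by apply: exprn_gt0; lra.
suff partial : \sum_(t < j) u t + C / 2 ^+ (maxn j n) <= C / 2 ^+ n.
  by apply: le_trans partial; rewrite lerDl divr_ge0 // ltW.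
elim: j => [|j IH]; first by rewrite big_ord0 add0r max0n.
rewrite big_ord_recr /=; case: (ltnP j n) => jn.
  by rewrite u_prefix // addr0 (maxn_idPr jn); rewrite (maxn_idPr (ltnW jn)) in IH.
rewrite (maxn_idPl (leqW jn)); rewrite (maxn_idPl jn) in IH.
have halve : C / 2 ^+ j.+1 + C / 2 ^+ j.+1 = C / 2 ^+ j.
  by rewrite exprS; field; exact: lt0r_neq0 (p2 j).
have := u_le j; lra.
Qed.

Lemma Dval_bound N Q (x : D N) : 0 <= Dval R Q x <= N%:R * 2 ^+ N.
Proof.
have digits_le : \sum_(j < N) (x j)%:R * (2 : R) ^+ j <= N%:R * 2 ^+ N.
  apply: (@le_trans _ _ (\sum_(j < N) (2 : R) ^+ N)).
    apply: ler_sum => j _; case: (x j); rewrite ?mul1r ?mul0r ?exprn_ge0 //.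
    by apply: ler_weXn2l; [lra | exact: ltnW].
  by rewrite sumr_const card_ord mulr_natl.
have p2Q : (0 : R) < 2 ^+ Q by apply: exprn_gt0; lra.
have digits_ge0 : 0 <= \sum_(j < N) (x j)%:R * (2 : R) ^+ j.
  by apply: sumr_ge0 => j _; rewrite mulr_ge0 ?exprn_ge0.
rewrite /Dval divr_ge0 ?(ltW p2Q) //= ler_pdivrMr // (le_trans digits_le) //.
by apply: ler_peMr; [rewrite mulr_ge0 ?exprn_ge0 | apply: exprn_ege1; lra].
Qed.

Lemma Dval_dist_le N Q (a b : D N) :
  `|Dval R Q a - Dval R Q b| <= N%:R * 2 ^+ N.
Proof.
have /andP[a0 a1] := Dval_bound N Q a; have /andP[b0 b1] := Dval_bound N Q b.
by rewrite ler_norml; apply/andP; split; lra.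
Qed.

Lemma dist_le_common_prefix m P Q (w W : 'I_m -> Sigma (P + Q)) x n :
  (1 <= P + Q)%N -> (forall i t, (t < n)%N -> W i t = w i t) ->
  dist R m P Q (w, x) (W, x) <= m%:R * ((P + Q)%:R * 2 ^+ (P + Q)) / 2 ^+ n.
Proof.
move=> hN agree; set C : R := (P + Q)%:R * 2 ^+ (P + Q).
have C0 : 0 <= C by rewrite mulr_ge0 ?exprn_ge0.
rewrite /dist /= [X in Num.sqrt X]big1 => [|i _]; last by rewrite subrr expr0n.
rewrite sqrtr0 addr0 -mulrA.
apply: (@le_trans _ _ (\sum_(i < m) C / 2 ^+ n)); last first.
  by rewrite sumr_const card_ord mulr_natl.
apply: ler_sum => i _; apply: rseries_le_geometric_tail => //.
  by move=> t tn; rewrite agree // subrr normr0 mul0r.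
move=> t; have p2 k : (0 : R) < 2 ^+ k by apply: exprn_gt0; lra.
apply: (@le_trans _ _ (C / 2 ^+ ((P + Q) * t.+1))).
  by apply: ler_wpM2r; [rewrite invr_ge0 ltW | exact: Dval_dist_le].
rewrite ler_wpM2l // lef_pV2 ?posrE //.
by apply: ler_weXn2l; [lra | rewrite leq_pmull].
Qed.

Lemma exists_div_pow2_lt (c eps : R) : 0 < eps -> exists n, c / 2 ^+ n < eps.
Proof.
move=> eps0; pose b := Num.bound (`|c| / eps).
have hb : `|c| / eps < b%:R by apply: archi_boundP; rewrite divr_ge0 // ltW.
have p2b : (0 : R) < 2 ^+ b by apply: exprn_gt0; lra.
have b2 : (b%:R : R) < 2 ^+ b by rewrite -natrX ltr_nat ltn_expl.
exists b; apply: le_lt_trans (_ : `|c| / 2 ^+ b < eps).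
  by apply: ler_wpM2r; [rewrite invr_ge0 ltW | exact: ler_norm].
by rewrite ltr_pdivrMr // mulrC -ltr_pdivrMr // (lt_trans hb).
Qed.

End Estimates.

Theorem theorem1 (R : realType) (m P Q : nat) (hm : (1 <= m)%N)
  (hN : (1 <= P + Q)%N)
  (F : 'I_m -> ('I_m -> D (P + Q)) -> D (P + Q))
  (hsc : strongly_connected F) :
  forall (E : Espace m (P + Q)) (eps : R), 0 < eps ->
    exists (E' : Espace m (P + Q)) (k : nat),
      (1 <= k)%N /\ iter k (GF F) E' = E' /\ dist R m P Q E E' < eps.
Proof.
move=> [w x] eps eps0.
have [n' close] := exists_div_pow2_lt R (m%:R * ((P + Q)%:R * 2 ^+ (P + Q))) eps eps0.
set n := n'.+1.
set y := foldl (GF_state F) x (strategy_letters w n).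
have [cs back] := clos_rt_state_edge_foldl F (hsc y x).
set S := strategy_letters w n ++ cs.
exists (periodic_strategy S, x), (size S); split; [|split].
- by rewrite size_cat size_mkseq.
- by rewrite iter_GF_periodic foldl_cat back.
- apply: le_lt_trans close; apply: dist_le_common_prefix => // i t tn'.
  exact/periodic_strategy_prefix/ltnW.
Qed.
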